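(* Let $T_{13}=\mathbf{e}^1_1\otimes(\mathbf{e}^2_1\otimes\mathbf{e}^3_1+\mathbf{e}^2_2\otimes\mathbf{e}^3_3)+\mathbf{e}^1_2\otimes(\mathbf{e}^2_1\otimes\mathbf{e}^3_2+\mathbf{e}^2_3\otimes\mathbf{e}^3_3)\in\mathbb{C}^2\otimes\mathbb{C}^3\otimes\mathbb{C}^3$ (a tensor of rank $4$) and $\varphi(\mathbf{a},\mathbf{b},\mathbf{c})=a_1b_1c_1+a_2b_1c_2+a_1b_2c_3+a_2b_3c_3$. A rank-one tensor $P=\mathbf{a}\otimes\mathbf{b}\otimes\mathbf{c}$ lies in the forbidden locus of $T_{13}$ if and only if one of the following holds: (i) ($a_1c_1+a_2c_2=0$ or $a_1b_2+a_2b_3=0$), and not ($b_2=b_3=0$), and not ($c_1=c_2=0$); (ii) ($b_3c_1-b_2c_2=0$ or $a_1c_1+a_2c_2=0$ or $a_1b_2+a_2b_3=0$) and $\varphi(\mathbf{a},\mathbf{b},\mathbf{c})=0$.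
   Context: $\mathbf{e}^i_j$ is the $j$-th standard basis vector of the $i$-th factor and $\mathbf{a}=(a_1,a_2)$, $\mathbf{b}=(b_1,b_2,b_3)$, $\mathbf{c}=(c_1,c_2,c_3)$ are nonzero coordinate vectors. The rank of a tensor is the minimal number of rank-one tensors summing to it; $P$ is in the forbidden locus of $T$ if $\mathrm{rk}(T-\lambda P)\ge\mathrm{rk}(T)$ for all $\lambda\in\mathbb{C}$. *)

From mathcomp Require Import all_boot all_algebra.
From mathcomp Require Import boolp Rstruct.
From mathcomp.real_closed Require Import complex.
Set Implicit Arguments. Unset Strict Implicit. Unset Printing Implicit Defensive.
Import GRing.Theory.
Local Open Scope ring_scope.

Definition C : numClosedFieldType := (Rdefinitions.R)[i].

(* Tensors in C^2 (x) C^3 (x) C^3, as arrays of coefficients indexed by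
   'I_2 * 'I_3 * 'I_3 (indices 0-based: e^i_j corresponds to index j-1). *)
Definition tensor := {ffun 'I_2 * 'I_3 * 'I_3 -> C}.

Definition outer (a : 'rV[C]_2) (b c : 'rV[C]_3) : tensor :=
  [ffun ijk : 'I_2 * 'I_3 * 'I_3 => a 0 ijk.1.1 * b 0 ijk.1.2 * c 0 ijk.2].

Definition rank_le (T : tensor) (r : nat) : Prop :=
  exists (A : 'I_r -> 'rV[C]_2) (B Cc : 'I_r -> 'rV[C]_3),
    T = \sum_(i < r) outer (A i) (B i) (Cc i).

Lemma rank_le_exists (T : tensor) : exists r, rank_le T r.
Proof.
pose I := ('I_2 * 'I_3 * 'I_3)%type.
exists #|{: I}|.
exists (fun i => T (enum_val i) *: delta_mx 0 (enum_val i).1.1),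
  (fun i => delta_mx 0 (enum_val i).1.2), (fun i => delta_mx 0 (enum_val i).2).
apply/ffunP => x.
rewrite sum_ffunE.
rewrite (reindex (@enum_rank I)) /=; last first.
  by exists enum_val => y _; rewrite ?enum_valK ?enum_rankK.
rewrite (bigD1 x) //= big1 ?addr0.
  by rewrite enum_rankK ffunE !mxE !eqxx /= !mulr1.
move=> y yx; rewrite enum_rankK ffunE !mxE.
case: x yx => [[x1 x2] x3]; case: y => [[y1 y2] y3] /= yx.
case: (x1 =P y1) => [e1|_]; last by rewrite !mulr0 !mul0r.
case: (x2 =P y2) => [e2|_]; last by rewrite !mulr0 !mul0r.
case: (x3 =P y3) => [e3|_]; last by rewrite !mulr0.
by subst; rewrite eqxx in yx.
Qed.


Lemma rank_le_existsb (T : tensor) : exists r, `[< rank_le T r >].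
Proof. by have [r Hr] := rank_le_exists T; exists r; apply/asboolP. Qed.

Definition trank (T : tensor) : nat := ex_minn (rank_le_existsb T).

Definition forbidden (T P : tensor) : Prop :=
  forall lambda : C, (trank T <= trank (T - lambda *: P)%R)%N.

(* basis vectors, 0-based: e2 j = e^1_{j+1} in C^2, e3 j in C^3 *)
Definition e2 (j : 'I_2) : 'rV[C]_2 := delta_mx 0 j.
Definition e3 (j : 'I_3) : 'rV[C]_3 := delta_mx 0 j.

Definition T13 : tensor :=
  outer (e2 0) (e3 0) (e3 0) + outer (e2 0) (e3 1) (e3 2) +
  outer (e2 1) (e3 0) (e3 1) + outer (e2 1) (e3 2) (e3 2).

Definition x1 (a : 'rV[C]_2) := a 0 0.
Definition x2 (a : 'rV[C]_2) := a 0 1.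
Definition y1 (b : 'rV[C]_3) := b 0 0.
Definition y2 (b : 'rV[C]_3) := b 0 1.
Definition y3 (b : 'rV[C]_3) := b 0 2.

Definition phi (a : 'rV[C]_2) (b c : 'rV[C]_3) : C :=
  x1 a * y1 b * y1 c + x2 a * y1 b * y2 c + x1 a * y2 b * y3 c + x2 a * y3 b * y3 c.

(* Write [M(s, t) = s T_1 + t T_2] for the pencil of 3 x 3 slices of a tensor [T].
   If [T] has rank at most 3, say [T = sum_r a_r (x) b_r (x) c_r], then
   [M(s, t) = B^T diag(a_r . (s, t)) C], so [det M] is [det B det C] times a
   product of three linear forms, and wherever two of these forms vanish
   [M(s, t)] has rank at most one.  For [P = a (x) b (x) c] the determinant of
   the pencil of [T13 - l P] is [l (a . (s, t)) (t b_2 - s b_3) (t c_1 - s c_2)].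
   Under the conditions of the theorem two of these forms have a common zero at
   which the pencil still has rank two, so [T13 - l P] has rank 4 for every
   [l <> 0].  When [b_2 = b_3 = 0] or [c_1 = c_2 = 0] an invertible change of
   coordinates in one factor carries [T13 - l P] back to [T13], whose rank is 4
   because its pencil determinant vanishes identically while two flattenings
   are invertible.  In all remaining cases an explicit [l] makes [T13 - l P] of
   rank 3, by simultaneously diagonalising its two slices or by an explicit
   decomposition. *)

From mathcomp Require Import all_boot all_algebra.
From mathcomp.real_closed Require Import complex.
From mathcomp Require Import boolp Rstruct ring.
Import GRing.Theory Num.Theory.
Local Open Scope ring_scope.

Lemma ord2_ind (P : 'I_2 -> Prop) : P 0 -> P 1 -> forall i, P i.
Proof. by move=> P0 P1 [[|[|//]] ?]; [move: P0 | move: P1]; congr P; apply: val_inj. Qed.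

Lemma ord3_ind (P : 'I_3 -> Prop) : P 0 -> P 1 -> P 2 -> forall i, P i.
Proof.
by move=> P0 P1 P2 [[|[|[|//]]] ?]; [move: P0 | move: P1 | move: P2]; congr P; apply: val_inj.
Qed.

Lemma big_ord3 (R : Type) (idx : R) (op : Monoid.law idx) (F : 'I_3 -> R) :
  \big[op/idx]_(i < 3) F i = op (op (F 0) (F 1)) (F 2).
Proof.
rewrite !big_ord_recl big_ord0 Monoid.mulm1 Monoid.mulmA.
by congr (op (op (F _) (F _)) (F _)); apply: val_inj.
Qed.

Lemma sum_ord3 (V : nmodType) (F : 'I_3 -> V) : \sum_(i < 3) F i = F 0 + F 1 + F 2.
Proof. exact: big_ord3. Qed.

Lemma prod_ord3 (R : pzSemiRingType) (F : 'I_3 -> R) : \prod_(i < 3) F i = F 0 * F 1 * F 2.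
Proof. exact: big_ord3. Qed.

Lemma mx_inordE (R : Type) n (A : 'M[R]_n.+1) : A = \matrix_(i, j) A (inord i) (inord j).
Proof. by apply/matrixP => i j; rewrite mxE !inord_val. Qed.

Lemma det_mx33 (R : comRingType) (A : 'M[R]_3) : \det A =
  A 0 0 * (A 1 1 * A 2 2 - A 1 2 * A 2 1)
  - A 0 1 * (A 1 0 * A 2 2 - A 1 2 * A 2 0)
  + A 0 2 * (A 1 0 * A 2 1 - A 1 1 * A 2 0).
Proof.
rewrite (expand_det_row _ 0) !big_ord_recl big_ord0 /cofactor.
rewrite !(expand_det_row _ 0) !big_ord_recl !big_ord0 /cofactor !det_mx11.
(* the cofactor expansion indexes entries by [lift]ed ordinals; reindexing
   through [inord] turns them into closed naturals that simplify *)
rewrite [A in LHS]mx_inordE [A in RHS]mx_inordE !mxE /bump /= !modn_small //.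
by rewrite !expr0 !expr1 !expr2; ring.
Qed.

Lemma det_row_eq0 (R : comRingType) n (A : 'M[R]_n) i :
  (forall j, A i j = 0) -> \det A = 0.
Proof. by move=> Ai0; rewrite (expand_det_row _ i) big1 // => j _; rewrite Ai0 mul0r. Qed.

Lemma cubic_coefs_eq0 (R : numDomainType) (p0 p1 p2 p3 : R) :
  (forall x, p0 + p1 * x + p2 * x ^+ 2 + p3 * x ^+ 3 = 0) ->
  [/\ p0 = 0, p1 = 0, p2 = 0 & p3 = 0].
Proof.
pose p x := p0 + p1 * x + p2 * x ^+ 2 + p3 * x ^+ 3; move=> p_eq0.
have nat_cancel n (y : R) : n.+1%:R * y = 0 -> y = 0.
  by move/eqP; rewrite mulf_eq0 pnatr_eq0 /= => /eqP.
have p0E : p0 = 0 by rewrite -(p_eq0 0); ring.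
have p2E : p2 = 0.
  apply: (nat_cancel 1%N); transitivity (p 1 + p (-1) - 2%:R * p 0); first by rewrite /p; ring.
  by rewrite /p !p_eq0; ring.
have p3E : p3 = 0.
  apply: (nat_cancel 5%N); transitivity (p 2%:R - 2%:R * p 1 + p 0 - 2%:R * p2).
    by rewrite /p; ring.
  by rewrite /p !p_eq0 p2E; ring.
split=> //; rewrite -(p_eq0 1) p0E p2E p3E; ring.
Qed.

Section AffineProducts.
Context {R : numDomainType}.

Lemma affine_prod2_coefs_eq0 (e1 e2 f1 f2 : R) :
  e1 * e2 = 0 -> e1 * f2 + f1 * e2 = 0 -> f1 * f2 = 0 ->
  (e1 = 0 /\ f1 = 0) \/ (e2 = 0 /\ f2 = 0).
Proof.
move=> /eqP; rewrite mulf_eq0 => /orP[]/eqP e_eq0 c1 /eqP; rewrite mulf_eq0;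
  rewrite e_eq0 (mul0r, mulr0) (add0r, addr0) in c1; move/eqP: c1;
  rewrite mulf_eq0 => /orP[]/eqP f_eq0 /orP[]/eqP f'_eq0; by [left | right].
Qed.

Lemma affine_prod3_eq0 (e0 e1 e2 f0 f1 f2 : R) :
  (forall x, (e0 + x * f0) * (e1 + x * f1) * (e2 + x * f2) = 0) ->
  [\/ e0 = 0 /\ f0 = 0, e1 = 0 /\ f1 = 0 | e2 = 0 /\ f2 = 0].
Proof.
move=> prod_eq0.
have [] := @cubic_coefs_eq0 _ (e0 * e1 * e2) (e0 * e1 * f2 + e0 * f1 * e2 + f0 * e1 * e2)
  (e0 * f1 * f2 + f0 * e1 * f2 + f0 * f1 * e2) (f0 * f1 * f2).
  by move=> x; rewrite -(prod_eq0 x); ring.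
(* after one [e_i] vanishes, either [f_i] does too or the two other factors
   multiply to the zero polynomial *)
move=> /eqP; rewrite !mulf_eq0 -orbA => /or3P[]/eqP e_eq0 c1 c2 c3.
- have [f_eq0|/mulfI f_reg] := eqVneq f0 0; first by constructor 1.
  suff: (e1 = 0 /\ f1 = 0) \/ (e2 = 0 /\ f2 = 0) by case; [constructor 2 | constructor 3].
  apply: affine_prod2_coefs_eq0; apply: f_reg; rewrite mulr0.
  + by rewrite -c1 e_eq0; ring.
  + by rewrite -c2 e_eq0; ring.
  + by rewrite -c3; ring.
- have [f_eq0|/mulfI f_reg] := eqVneq f1 0; first by constructor 2.
  suff: (e0 = 0 /\ f0 = 0) \/ (e2 = 0 /\ f2 = 0) by case; [constructor 1 | constructor 3].
  apply: affine_prod2_coefs_eq0; apply: f_reg; rewrite mulr0.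
  + by rewrite -c1 e_eq0; ring.
  + by rewrite -c2 e_eq0; ring.
  + by rewrite -c3; ring.
- have [f_eq0|/mulfI f_reg] := eqVneq f2 0; first by constructor 3.
  suff: (e0 = 0 /\ f0 = 0) \/ (e1 = 0 /\ f1 = 0) by case; [constructor 1 | constructor 2].
  apply: affine_prod2_coefs_eq0; apply: f_reg; rewrite mulr0.
  + by rewrite -c1 e_eq0; ring.
  + by rewrite -c2 e_eq0; ring.
  + by rewrite -c3; ring.
Qed.

Lemma affine_prod3_double_root (D K F e0 e1 e2 f0 f1 f2 : R) :
  (forall x, D * ((e0 + x * f0) * (e1 + x * f1) * (e2 + x * f2)) = x ^+ 2 * (K + x * F)) ->
  (K != 0) || (F != 0) ->
  [\/ e0 = 0 /\ e1 = 0, e0 = 0 /\ e2 = 0 | e1 = 0 /\ e2 = 0].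
Proof.
move=> prod_eq KF.
have [] := @cubic_coefs_eq0 _ (D * (e0 * e1 * e2))
  (D * (e0 * e1 * f2 + e0 * f1 * e2 + f0 * e1 * e2))
  (D * (e0 * f1 * f2 + f0 * e1 * f2 + f0 * f1 * e2) - K) (D * (f0 * f1 * f2) - F).
  by move=> x; transitivity (D * ((e0 + x * f0) * (e1 + x * f1) * (e2 + x * f2)) -
    x ^+ 2 * (K + x * F)); [ring | rewrite prod_eq subrr].
move=> c0 c1 /eqP; rewrite subr_eq0 => /eqP KE /eqP; rewrite subr_eq0 => /eqP FE.
have D_neq0 : D != 0 by apply: contraTneq KF => D0; rewrite -KE -FE D0 !mul0r eqxx.
move/eqP: c1; move/eqP: c0; rewrite !mulf_eq0 (negbTE D_neq0) /= -orbA.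
(* a factor vanishing identically would kill the cubic [x ^+ 2 * (K + x * F)] *)
have no_zero_factor : ~ [\/ e0 = 0 /\ f0 = 0, e1 = 0 /\ f1 = 0 | e2 = 0 /\ f2 = 0].
  by move=> zero_factor; move: KF; rewrite -KE -FE;
    case: zero_factor => -[-> ->]; rewrite !(mul0r, mulr0, addr0) eqxx.
case/or3P=> /eqP e_eq0; rewrite e_eq0 !(mul0r, mulr0, add0r, addr0) !mulf_eq0 -orbA;
  case/or3P=> /eqP e'_eq0; by [constructor | case: no_zero_factor; constructor].
Qed.

End AffineProducts.

Lemma outerE a b c i j k : outer a b c (i, j, k) = a 0 i * b 0 j * c 0 k.
Proof. by rewrite ffunE. Qed.

Lemma tensor_sub_scaleE (T P : tensor) l x : (T - l *: P) x = T x - l * P x.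
Proof. by rewrite !ffunE. Qed.

Lemma outer0 (b c : 'rV[C]_3) : outer 0 b c = 0.
Proof. by apply/ffunP => x; rewrite !ffunE !mxE !mul0r. Qed.

Lemma rank_le_succ (T : tensor) r : rank_le T r -> rank_le T r.+1.
Proof.
move=> [A [B [Cc ->]]].
pose pad (V : zmodType) (X : 'I_r -> V) (i : 'I_r.+1) :=
  if unlift ord_max i is Some j then X j else 0.
exists (pad _ A), (pad _ B), (pad _ Cc).
rewrite big_ord_recr /pad /= unlift_none outer0 addr0.
apply: eq_bigr => i _.
have -> : widen_ord (leqnSn r) i = lift ord_max i by apply: val_inj; exact: esym (lift_max i).
by rewrite liftK.
Qed.

Lemma rank_le_leq (T : tensor) r r' : (r <= r')%N -> rank_le T r -> rank_le T r'.
Proof. by move/subnK <-; elim: (r' - r)%N => // n IHn /IHn /rank_le_succ. Qed.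

Lemma trank_min (T : tensor) r : rank_le T r -> (trank T <= r)%N.
Proof. by rewrite /trank; case: ex_minnP => m _ m_min /asboolP /m_min. Qed.

Lemma rank_le_trank (T : tensor) : rank_le T (trank T).
Proof. by rewrite /trank; case: ex_minnP => m /asboolP. Qed.

Lemma rank_le_trankP (T : tensor) r : rank_le T r <-> (trank T <= r)%N.
Proof. by split=> [/trank_min // | le_rkT]; exact: rank_le_leq le_rkT (rank_le_trank T). Qed.

Lemma forbidden_trankS (T P : tensor) r : trank T = r.+1 ->
  forbidden T P <-> forall l, ~ rank_le (T - l *: P) r.
Proof.
move=> rkT; have rkTE l : rank_le (T - l *: P) r <-> ~~ (trank T <= trank (T - l *: P)%R)%N.
  by rewrite rank_le_trankP rkT -ltnNge ltnS.
by split=> forb l; [move/rkTE; rewrite forb | apply/negPn/negP => /rkTE/forb].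
Qed.

Lemma rank_le3_outer (T : tensor) (A0 A1 A2 : 'rV[C]_2) (B0 B1 B2 C0 C1 C2 : 'rV[C]_3) :
  T = outer A0 B0 C0 + outer A1 B1 C1 + outer A2 B2 C2 -> rank_le T 3%N.
Proof.
move=> ->; exists [ffun r : 'I_3 => [:: A0; A1; A2]`_r], [ffun r : 'I_3 => [:: B0; B1; B2]`_r],
  [ffun r : 'I_3 => [:: C0; C1; C2]`_r].
by rewrite sum_ord3 !ffunE.
Qed.

Definition pencil (T : tensor) (s t : C) : 'M[C]_3 :=
  \matrix_(j, k) (s * T (0, j, k) + t * T (1, j, k)).

Definition lform (u : 'rV[C]_2) (s t : C) : C := s * u 0 0 + t * u 0 1.

Definition minor (M : 'M[C]_3) (j1 j2 k1 k2 : 'I_3) : C :=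
  M j1 k1 * M j2 k2 - M j1 k2 * M j2 k1.

Lemma lformD u s t s' t' x :
  lform u (s + x * s') (t + x * t') = lform u s t + x * lform u s' t'.
Proof. by rewrite /lform; ring. Qed.

Lemma pencil00 (T : tensor) : pencil T 0 0 = 0.
Proof. by apply/matrixP => j k; rewrite !mxE !mul0r addr0. Qed.

Section RankThreeDecomposition.
Variables (A : 'I_3 -> 'rV[C]_2) (B Cc : 'I_3 -> 'rV[C]_3).

Lemma sum_outerE i j k : (\sum_(r < 3) outer (A r) (B r) (Cc r)) (i, j, k) =
  \sum_(r < 3) A r 0 i * B r 0 j * Cc r 0 k.
Proof. by rewrite sum_ffunE; apply: eq_bigr => r _; rewrite ffunE. Qed.

Lemma pencil_sum_outerE s t j k :
  pencil (\sum_(r < 3) outer (A r) (B r) (Cc r)) s t j k =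
  \sum_(r < 3) lform (A r) s t * B r 0 j * Cc r 0 k.
Proof. by rewrite mxE !sum_outerE !sum_ord3 /lform; ring. Qed.

Lemma pencil_sum_outer s t : pencil (\sum_(r < 3) outer (A r) (B r) (Cc r)) s t =
  (\matrix_r B r)^T *m diag_mx (\row_r lform (A r) s t) *m \matrix_r Cc r.
Proof.
apply/matrixP => j k; rewrite pencil_sum_outerE mul_mx_diag mxE !sum_ord3 !mxE.
by ring.
Qed.

Lemma det_pencil_sum_outer s t :
  \det (pencil (\sum_(r < 3) outer (A r) (B r) (Cc r)) s t) =
  \det (\matrix_r B r) * \det (\matrix_r Cc r) * \prod_(r < 3) lform (A r) s t.
Proof.
rewrite pencil_sum_outer !det_mulmx det_tr det_diag mulrAC.
by congr (_ * _); apply: eq_bigr => r _; rewrite mxE.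
Qed.

Lemma minor_pencil_sum_outer s t j1 j2 k1 k2 :
  [\/ lform (A 0) s t = 0 /\ lform (A 1) s t = 0, lform (A 0) s t = 0 /\ lform (A 2) s t = 0
     | lform (A 1) s t = 0 /\ lform (A 2) s t = 0] ->
  minor (pencil (\sum_(r < 3) outer (A r) (B r) (Cc r)) s t) j1 j2 k1 k2 = 0.
Proof.
by rewrite /minor !pencil_sum_outerE !sum_ord3; case=> -[-> ->]; ring.
Qed.

Lemma flattening2_sum_outer (f : 'I_3 -> 'I_2) (g : 'I_3 -> 'I_3) :
  \matrix_(j, m) (\sum_(r < 3) outer (A r) (B r) (Cc r)) (f m, j, g m) =
  (\matrix_r B r)^T *m \matrix_(r, m) (A r 0 (f m) * Cc r 0 (g m)).
Proof.
apply/matrixP => j m; rewrite !mxE sum_outerE; apply: eq_bigr => r _; rewrite !mxE; ring.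
Qed.

Lemma flattening3_sum_outer (f : 'I_3 -> 'I_2) (g : 'I_3 -> 'I_3) :
  \matrix_(m, k) (\sum_(r < 3) outer (A r) (B r) (Cc r)) (f m, g m, k) =
  \matrix_(m, r) (A r 0 (f m) * B r 0 (g m)) *m \matrix_r Cc r.
Proof. by apply/matrixP => m k; rewrite !mxE sum_outerE; apply: eq_bigr => r _; rewrite !mxE. Qed.
End RankThreeDecomposition.

Lemma rank_gt3_pencil_double_root (T : tensor) s t s' t' K F :
  (forall x, \det (pencil T (s + x * s') (t + x * t')) = x ^+ 2 * (K + x * F)) ->
  (K != 0) || (F != 0) -> (exists j1 j2 k1 k2, minor (pencil T s t) j1 j2 k1 k2 != 0) ->
  ~ rank_le T 3%N.
Proof.
move=> det_pencil KF [j1 [j2 [k1 [k2]]]] + [A [B [Cc T_eq]]].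
rewrite T_eq minor_pencil_sum_outer ?eqxx //.
apply: (@affine_prod3_double_root _ (\det (\matrix_r B r) * \det (\matrix_r Cc r)) K F
  _ _ _ (lform (A 0) s' t') (lform (A 1) s' t') (lform (A 2) s' t') _ KF) => x.
by rewrite -det_pencil T_eq det_pencil_sum_outer prod_ord3 !lformD.
Qed.

Lemma lform_eq0 (u : 'rV[C]_2) s t s' t' :
  s * t' - t * s' != 0 -> lform u s t = 0 -> lform u s' t' = 0 -> u = 0.
Proof.
move=> /mulfI st_indep uv uw; apply/rowP; elim/ord2_ind; rewrite mxE; apply: st_indep.
- transitivity (t' * lform u s t - t * lform u s' t'); first by rewrite /lform; ring.
  by rewrite uv uw; ring.
- transitivity (s * lform u s' t' - s' * lform u s t); first by rewrite /lform; ring.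
  by rewrite uv uw; ring.
Qed.

Lemma rank_gt3_pencil_forms (T : tensor) (k : C) (u1 u2 u3 : 'rV[C]_2) s t :
  (forall s t, \det (pencil T s t) = k * lform u1 s t * lform u2 s t * lform u3 s t) ->
  k != 0 -> u1 != 0 -> u2 != 0 -> u3 != 0 -> lform u1 s t = 0 -> lform u2 s t = 0 ->
  (exists j1 j2 k1 k2, minor (pencil T s t) j1 j2 k1 k2 != 0) -> ~ rank_le T 3%N.
Proof.
move=> det_pencil k_neq0 u1_neq0 u2_neq0 u3_neq0 u1v u2v minor_neq0.
have [s' [t' st_indep]] : exists s' t', s * t' - t * s' != 0.
  have [s0|s_neq0] := eqVneq s 0; last by exists 0, 1; rewrite mulr1 mulr0 subr0.
  have [t0|t_neq0] := eqVneq t 0.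
    by move: minor_neq0 => [j1 [j2 [k1 [k2]]]]; rewrite s0 t0 pencil00 /minor !mxE subrr eqxx.
  by exists 1, 0; rewrite s0 mul0r mulr1 sub0r oppr_eq0.
have lform_neq0 u : u != 0 -> lform u s t = 0 -> lform u s' t' != 0.
  by move=> u_neq0 uv; apply: contra u_neq0 => /eqP uw; apply/eqP; exact: lform_eq0 st_indep uv uw.
(* along the line (s, t) + x (s', t'), the first two forms vanish only at x = 0 *)
apply: (@rank_gt3_pencil_double_root _ s t s' t'
  (k * lform u1 s' t' * lform u2 s' t' * lform u3 s t)
  (k * lform u1 s' t' * lform u2 s' t' * lform u3 s' t') _ _ minor_neq0).
  by move=> x; rewrite det_pencil !lformD u1v u2v; ring.
have [u1w u2w] := (lform_neq0 _ u1_neq0 u1v, lform_neq0 _ u2_neq0 u2v).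
have [u3v|u3v] := eqVneq (lform u3 s t) 0.
  have u3w := lform_neq0 _ u3_neq0 u3v.
  by rewrite !mulf_eq0 !negb_or k_neq0 u1w u2w u3w orbT.
by rewrite !mulf_eq0 !negb_or k_neq0 u1w u2w u3v.
Qed.

Lemma T13E i j k : T13 (i, j, k) =
  if [|| (i == 0) && (j == 0) && (k == 0), (i == 0) && (j == 1) && (k == 2),
         (i == 1) && (j == 0) && (k == 1) | (i == 1) && (j == 2) && (k == 2)] then 1 else 0.
Proof.
elim/ord2_ind: i; elim/ord3_ind: j; elim/ord3_ind: k;
  by rewrite !ffunE /e2 /e3 !mxE /= !(mulr0, mul0r, mulr1, addr0, add0r).
Qed.

Lemma det_pencil_T13 s t : \det (pencil T13 s t) = 0.
Proof. by rewrite det_mx33 !mxE !T13E /=; ring. Qed.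

Lemma rank_le_T13 : rank_le T13 4%N.
Proof.
exists [ffun r : 'I_4 => [:: e2 0; e2 0; e2 1; e2 1]`_r],
  [ffun r : 'I_4 => [:: e3 0; e3 1; e3 0; e3 2]`_r],
  [ffun r : 'I_4 => [:: e3 0; e3 2; e3 1; e3 2]`_r].
by rewrite !big_ord_recl big_ord0 addr0 !ffunE !addrA.
Qed.

Lemma unitmx_det_neq0 n (M : 'M[C]_n) : M \in unitmx -> \det M != 0.
Proof. by rewrite unitmxE unitfE. Qed.

Lemma rank_gt3_T13 : ~ rank_le T13 3%N.
Proof.
move=> [A [B [Cc T13_eq]]].
pose W2 : 'M[C]_3 :=
  \matrix_(r, m) (A r 0 (if m == 2 then 1 else 0) * Cc r 0 (if m == 0 then 0 else 2)).
pose W3 : 'M[C]_3 :=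
  \matrix_(m, r) (A r 0 (if m == 1 then 1 else 0) * B r 0 (if m == 2 then 1 else 0)).
(* the second and third flattenings of [T13] are invertible *)
have /mulmx1_unit[/unitmx_det_neq0 B_neq0 /unitmx_det_neq0 W2_neq0] :
    (\matrix_r B r)^T *m W2 = 1%:M.
  rewrite -flattening2_sum_outer -T13_eq.
  by apply/matrixP => j m; elim/ord3_ind: j; elim/ord3_ind: m; rewrite !mxE T13E.
rewrite det_tr in B_neq0.
have /mulmx1_unit[_ /unitmx_det_neq0 C_neq0] : W3 *m \matrix_r Cc r = 1%:M.
  rewrite -flattening3_sum_outer -T13_eq.
  by apply/matrixP => m k; elim/ord3_ind: m; elim/ord3_ind: k; rewrite !mxE T13E.
have prod_eq0 x :
    (A 0 0 0 + x * A 0 0 1) * (A 1 0 0 + x * A 1 0 1) * (A 2 0 0 + x * A 2 0 1) = 0.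
  have /eqP := det_pencil_T13 1 x.
  rewrite T13_eq det_pencil_sum_outer prod_ord3 /lform !mul1r !mulf_eq0.
  by rewrite (negbTE B_neq0) (negbTE C_neq0) -!mulf_eq0 => /eqP.
have [r Ar_eq0] : exists r, forall i, A r 0 i = 0.
  by case/affine_prod3_eq0: prod_eq0 => -[Ar0 Ar1]; [exists 0 | exists 1 | exists 2];
    elim/ord2_ind.
by move/eqP: W2_neq0; apply; apply: (@det_row_eq0 _ _ _ r) => m; rewrite mxE Ar_eq0 mul0r.
Qed.

Lemma trank_T13 : trank T13 = 4%N.
Proof.
apply/eqP; rewrite eqn_leq (@trank_min _ _ rank_le_T13) /= leqNgt ltnS.
by apply/negP => /rank_le_trankP; exact: rank_gt3_T13.
Qed.

Lemma forbidden_T13E (P : tensor) :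
  forbidden T13 P <-> forall l, l != 0 -> ~ rank_le (T13 - l *: P) 3%N.
Proof.
rewrite (forbidden_trankS _ _ _ trank_T13); split=> forb l //.
by have [->|/forb //] := eqVneq l 0; rewrite scale0r subr0; exact: rank_gt3_T13.
Qed.

Definition vec2 (x y : C) : 'rV[C]_2 := \row_(j < 2) (if j == 0 then x else y).

Lemma lform_vec2 x y s t : lform (vec2 x y) s t = s * x + t * y.
Proof. by rewrite /lform !mxE. Qed.

Lemma vec2_eq0 x y : (vec2 x y == 0) = (x == 0) && (y == 0).
Proof.
apply/eqP/andP => [v0 | [/eqP -> /eqP ->]]; last by apply/rowP; elim/ord2_ind; rewrite !mxE.
by have := congr1 (fun v : 'rV[C]_2 => (v 0 0, v 0 1)) v0; rewrite !mxE /= => -[-> ->].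
Qed.

Lemma vec2N_neq0 x y : ~ (x = 0 /\ y = 0) -> vec2 (- y) x != 0.
Proof.
by move=> xy_neq0; rewrite vec2_eq0 oppr_eq0; apply/negP => /andP[/eqP y0 /eqP x0]; apply: xy_neq0.
Qed.

Section PerturbedT13.
Variables (a : 'rV[C]_2) (b c : 'rV[C]_3) (l : C).

Lemma pencil_T13_subE s t j k : pencil (T13 - l *: outer a b c) s t j k =
  pencil T13 s t j k - l * lform a s t * b 0 j * c 0 k.
Proof. by rewrite !mxE !tensor_sub_scaleE !outerE /lform; ring. Qed.

Lemma det_pencil_T13_sub s t : \det (pencil (T13 - l *: outer a b c) s t) =
  l * lform a s t * lform (vec2 (- b 0 2) (b 0 1)) s t * lform (vec2 (- c 0 1) (c 0 0)) s t.
Proof. by rewrite det_mx33 !pencil_T13_subE !lform_vec2 !mxE !T13E /= /lform; ring. Qed.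

Lemma minor_pencil_T13_sub s t :
  minor (pencil (T13 - l *: outer a b c) s t) 0 1 0 2 =
    s ^+ 2 - s * (l * lform a s t) * (b 0 0 * c 0 0 + b 0 1 * c 0 2) /\
  minor (pencil (T13 - l *: outer a b c) s t) 0 2 1 2 =
    t ^+ 2 - t * (l * lform a s t) * (b 0 0 * c 0 1 + b 0 2 * c 0 2).
Proof. by rewrite /minor !pencil_T13_subE !mxE !T13E /=; split; ring. Qed.

Lemma minor_pencil_T13_sub_neq0 s t :
  ~ (s = 0 /\ t = 0) ->
  l * lform a s t * (b 0 0 * c 0 0 + b 0 1 * c 0 2) = 0 ->
  l * lform a s t * (b 0 0 * c 0 1 + b 0 2 * c 0 2) = 0 ->
  exists j1 j2 k1 k2, minor (pencil (T13 - l *: outer a b c) s t) j1 j2 k1 k2 != 0.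
Proof.
move=> st_neq0 X_eq0 Y_eq0; have [minorX minorY] := minor_pencil_T13_sub s t.
have [s0|s_neq0] := eqVneq s 0.
  have t_neq0 : t != 0 by apply: contra_notN st_neq0 => /eqP.
  by exists 0, 2, 1, 2; rewrite minorY -mulrA Y_eq0 mulr0 subr0 expf_neq0.
by exists 0, 1, 0, 2; rewrite minorX -mulrA X_eq0 mulr0 subr0 expf_neq0.
Qed.
End PerturbedT13.

Section PencilObstructions.
Variables (a : 'rV[C]_2) (b c : 'rV[C]_3) (l : C).
Hypotheses (l_neq0 : l != 0) (a_neq0 : a != 0).
Hypotheses (b12_neq0 : ~ (b 0 1 = 0 /\ b 0 2 = 0)) (c01_neq0 : ~ (c 0 0 = 0 /\ c 0 1 = 0)).

Lemma rank_gt3_T13_sub_ac :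
  a 0 0 * c 0 0 + a 0 1 * c 0 1 = 0 -> ~ rank_le (T13 - l *: outer a b c) 3%N.
Proof.
move=> ac_eq0; have la_eq0 : lform a (c 0 0) (c 0 1) = 0 by rewrite /lform -ac_eq0; ring.
apply: (@rank_gt3_pencil_forms _ l a (vec2 (- c 0 1) (c 0 0)) (vec2 (- b 0 2) (b 0 1))
  (c 0 0) (c 0 1)) => //; rewrite ?vec2N_neq0 //.
- by move=> s t; rewrite det_pencil_T13_sub; ring.
- by rewrite lform_vec2; ring.
- by apply: minor_pencil_T13_sub_neq0; rewrite // la_eq0 mulr0 mul0r.
Qed.

Lemma rank_gt3_T13_sub_ab :
  a 0 0 * b 0 1 + a 0 1 * b 0 2 = 0 -> ~ rank_le (T13 - l *: outer a b c) 3%N.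
Proof.
move=> ab_eq0; have la_eq0 : lform a (b 0 1) (b 0 2) = 0 by rewrite /lform -ab_eq0; ring.
apply: (@rank_gt3_pencil_forms _ l a (vec2 (- b 0 2) (b 0 1)) (vec2 (- c 0 1) (c 0 0))
  (b 0 1) (b 0 2)) => //; rewrite ?vec2N_neq0 //.
- by move=> s t; rewrite det_pencil_T13_sub; ring.
- by rewrite lform_vec2; ring.
- by apply: minor_pencil_T13_sub_neq0; rewrite // la_eq0 mulr0 mul0r.
Qed.

Lemma rank_gt3_T13_sub_bc :
  a 0 0 * c 0 0 + a 0 1 * c 0 1 != 0 -> b 0 2 * c 0 0 - b 0 1 * c 0 1 = 0 ->
  phi a b c = 0 -> ~ rank_le (T13 - l *: outer a b c) 3%N.
Proof.
move=> /mulfI ac_reg bc_eq0 phi_eq0.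
have X_eq0 : b 0 0 * c 0 0 + b 0 1 * c 0 2 = 0.
  apply: ac_reg; rewrite mulr0.
  transitivity (c 0 0 * phi a b c - a 0 1 * c 0 2 * (b 0 2 * c 0 0 - b 0 1 * c 0 1)).
    by rewrite /phi /x1 /x2 /y1 /y2 /y3; ring.
  by rewrite phi_eq0 bc_eq0; ring.
have Y_eq0 : b 0 0 * c 0 1 + b 0 2 * c 0 2 = 0.
  apply: ac_reg; rewrite mulr0.
  transitivity (c 0 1 * phi a b c + a 0 0 * c 0 2 * (b 0 2 * c 0 0 - b 0 1 * c 0 1)).
    by rewrite /phi /x1 /x2 /y1 /y2 /y3; ring.
  by rewrite phi_eq0 bc_eq0; ring.
apply: (@rank_gt3_pencil_forms _ l (vec2 (- b 0 2) (b 0 1)) (vec2 (- c 0 1) (c 0 0)) a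
  (c 0 0) (c 0 1)) => //; rewrite ?vec2N_neq0 //.
- by move=> s t; rewrite det_pencil_T13_sub; ring.
- by rewrite lform_vec2 -[RHS]oppr0 -bc_eq0; ring.
- by rewrite lform_vec2; ring.
- by apply: minor_pencil_T13_sub_neq0; rewrite // ?X_eq0 ?Y_eq0 mulr0.
Qed.
End PencilObstructions.

Definition contract2 (T : tensor) (h : 'M[C]_3) : tensor :=
  [ffun x => \sum_(m < 3) h x.1.2 m * T (x.1.1, m, x.2)].

Definition contract3 (T : tensor) (h : 'M[C]_3) : tensor :=
  [ffun x => \sum_(m < 3) T (x.1.1, x.1.2, m) * h m x.2].

Lemma rank_le_contract2 (T : tensor) h r : rank_le T r -> rank_le (contract2 T h) r.
Proof.
move=> [A [B [Cc ->]]]; exists A, (fun q => B q *m h^T), Cc.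
apply/ffunP => -[[i j] k]; rewrite ffunE sum_ffunE /=.
under eq_bigr do rewrite sum_ffunE big_distrr.
rewrite exchange_big; apply: eq_bigr => q _; rewrite !ffunE !mxE big_distrr big_distrl /=.
by apply: eq_bigr => m _; rewrite !ffunE !mxE; ring.
Qed.

Lemma rank_le_contract3 (T : tensor) h r : rank_le T r -> rank_le (contract3 T h) r.
Proof.
move=> [A [B [Cc ->]]]; exists A, B, (fun q => Cc q *m h).
apply/ffunP => -[[i j] k]; rewrite ffunE sum_ffunE /=.
under eq_bigr do rewrite sum_ffunE big_distrl.
rewrite exchange_big; apply: eq_bigr => q _; rewrite !ffunE !mxE big_distrr /=.
by apply: eq_bigr => m _; rewrite !ffunE; ring.
Qed.

Lemma rV2_neq0 (a : 'rV[C]_2) : a != 0 -> ~ (a 0 0 = 0 /\ a 0 1 = 0).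
Proof.
by move=> + [a0 a1]; apply/negP; rewrite negbK; apply/eqP/rowP; elim/ord2_ind; rewrite mxE.
Qed.

Lemma proportional2 (p q u v : C) :
  ~ (p = 0 /\ q = 0) -> p * v - q * u = 0 -> exists k, u = k * p /\ v = k * q.
Proof.
move=> pq_neq0 /eqP; rewrite subr_eq0 => /eqP pv_qu.
have [p0|p_neq0] := eqVneq p 0.
  have q_neq0 : q != 0 by apply: contra_notN pq_neq0 => /eqP.
  exists (v / q); split; last by field.
  by apply: (mulfI q_neq0); rewrite -pv_qu p0; field.
exists (u / p); split; first by field.
by apply: (mulfI p_neq0); rewrite pv_qu; field.
Qed.

Lemma orthogonal2 {a : 'rV[C]_2} {u v : C} :
  a != 0 -> a 0 0 * u + a 0 1 * v = 0 -> exists k, u = k * - a 0 1 /\ v = k * a 0 0.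
Proof.
move=> /rV2_neq0 a_neq0 au_eq0; apply: proportional2.
  by move=> -[a1 a0]; apply: a_neq0; split=> //; apply/eqP; rewrite -oppr_eq0 a1.
by rewrite -[RHS]oppr0 -au_eq0; ring.
Qed.

Lemma rank_gt3_T13_sub_b12 (a : 'rV[C]_2) (b c : 'rV[C]_3) l : a != 0 ->
  b 0 1 = 0 -> b 0 2 = 0 -> a 0 0 * c 0 0 + a 0 1 * c 0 1 = 0 ->
  ~ rank_le (T13 - l *: outer a b c) 3%N.
Proof.
move=> a_neq0 b1_eq0 b2_eq0 /(orthogonal2 a_neq0)[k [c0E c1E]].
(* [h = 1 + N] with [N] of rank one and [N *m N = 0] because [a . c = 0]; the
   inverse [1 - N] of [h] maps [T13] to [T13 - l *: outer a b c] *)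
pose h : 'M[C]_3 := \matrix_(m, n) ((m == n)%:R + l * b 0 0 * [:: a 0 0; a 0 1; 0]`_m * c 0 n).
have contract_T13 : contract3 (T13 - l *: outer a b c) h = T13.
  apply/ffunP => -[[i j] k'].
  rewrite [RHS]T13E ffunE sum_ord3 !tensor_sub_scaleE !outerE !T13E !mxE /=.
  by elim/ord2_ind: i; elim/ord3_ind: j; elim/ord3_ind: k';
    rewrite /= ?b1_eq0 ?b2_eq0 ?c0E ?c1E; ring.
by move=> /(rank_le_contract3 _ h); rewrite contract_T13; exact: rank_gt3_T13.
Qed.

Lemma rank_gt3_T13_sub_c01 (a : 'rV[C]_2) (b c : 'rV[C]_3) l : a != 0 ->
  c 0 0 = 0 -> c 0 1 = 0 -> a 0 0 * b 0 1 + a 0 1 * b 0 2 = 0 ->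
  ~ rank_le (T13 - l *: outer a b c) 3%N.
Proof.
move=> a_neq0 c0_eq0 c1_eq0 /(orthogonal2 a_neq0)[k [b1E b2E]].
(* as above, with the roles of [b] and [c] exchanged *)
pose h : 'M[C]_3 := \matrix_(m, n) ((m == n)%:R + l * c 0 2 * b 0 m * [:: 0; a 0 0; a 0 1]`_n).
have contract_T13 : contract2 (T13 - l *: outer a b c) h = T13.
  apply/ffunP => -[[i j] k'].
  rewrite [RHS]T13E ffunE sum_ord3 !tensor_sub_scaleE !outerE !T13E !mxE /=.
  by elim/ord2_ind: i; elim/ord3_ind: j; elim/ord3_ind: k';
    rewrite /= ?c0_eq0 ?c1_eq0 ?b1E ?b2E; ring.
by move=> /(rank_le_contract2 _ h); rewrite contract_T13; exact: rank_gt3_T13.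
Qed.

Definition slice (T : tensor) (i : 'I_2) : 'M[C]_3 := \matrix_(j, k) T (i, j, k).

Lemma rank_le3_diag_slices (T : tensor) (X Y : 'M[C]_3) :
  X \in unitmx -> Y \in unitmx -> (forall i, is_diag_mx (X *m slice T i *m Y)) ->
  rank_le T 3%N.
Proof.
move=> Xu Yu diag; have [d dE] := fin_all_exists (fun i => elimT (diag_mxP _) (diag i)).
have sliceE i : slice T i = invmx X *m diag_mx (d i) *m invmx Y.
  by rewrite -dE !mulmxA mulVmx // mul1mx -mulmxA mulmxV // mulmx1.
exists (fun r => \row_i d i 0 r), (fun r => \row_j invmx X j r), (fun r => row r (invmx Y)).
apply/ffunP => -[[i j] k]; rewrite sum_ffunE.
have /matrixP/(_ j k) := sliceE i; rewrite mxE => ->.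
rewrite mul_mx_diag mxE; apply: eq_bigr => r _; rewrite !ffunE !mxE; ring.
Qed.

Definition mx_of_rows (rows : seq (seq C)) : 'M[C]_3 :=
  \matrix_(i, j) (nth [::] rows i)`_j.

Lemma rank_le3_T13_sub_generic {a : 'rV[C]_2} {b c : 'rV[C]_3} :
  a 0 0 * c 0 0 + a 0 1 * c 0 1 != 0 -> a 0 0 * b 0 1 + a 0 1 * b 0 2 != 0 ->
  b 0 2 * c 0 0 - b 0 1 * c 0 1 != 0 -> rank_le (T13 - 1 *: outer a b c) 3%N.
Proof.
set mu := a 0 0 * c 0 0 + a 0 1 * c 0 1; set nu := a 0 0 * b 0 1 + a 0 1 * b 0 2.
set g := b 0 2 * c 0 0 - b 0 1 * c 0 1 => mu_neq0 nu_neq0 g_neq0.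
pose X := mx_of_rows [:: [:: 0; a 0 0; a 0 1]; [:: 0; b 0 2; - b 0 1];
  [:: mu * g; mu * b 0 2 * c 0 2 - c 0 1 * (1 - mu * b 0 0);
      c 0 0 * (1 - mu * b 0 0) - mu * b 0 1 * c 0 2]].
pose Y := (mx_of_rows [:: [:: a 0 0; a 0 1; 0];
  [:: nu * b 0 0 * c 0 1 - b 0 2 * (1 - nu * c 0 2); b 0 1 * (1 - nu * c 0 2) - nu * b 0 0 * c 0 0;
      nu * (b 0 1 * c 0 1 - b 0 2 * c 0 0)]; [:: c 0 1; - c 0 0; 0]])^T.
apply: (@rank_le3_diag_slices _ X Y).
- rewrite unitmxE unitfE (_ : \det X = - (mu * g * nu)) ?oppr_eq0 ?mulf_neq0 //.
  by rewrite det_mx33 !mxE /= /mu /g /nu; ring.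
- rewrite unitmxE unitfE det_tr (_ : \det (mx_of_rows _) = - (mu * g * nu)) ?oppr_eq0 ?mulf_neq0 //.
  by rewrite det_mx33 !mxE /= /mu /g /nu; ring.
elim/ord2_ind; apply/is_diag_mxP; elim/ord3_ind; elim/ord3_ind => //= _;
  rewrite !mxE !sum_ord3 !mxE !sum_ord3 !mxE !tensor_sub_scaleE !outerE !T13E /= /mu /g /nu; ring.
Qed.

Definition vec3 (x y z : C) : 'rV[C]_3 := \row_(j < 3) [:: x; y; z]`_j.

Lemma rank_le3_T13_sub_bc {a : 'rV[C]_2} {b c : 'rV[C]_3} :
  b 0 2 * c 0 0 - b 0 1 * c 0 1 = 0 -> ~ (c 0 0 = 0 /\ c 0 1 = 0) ->
  a 0 0 * c 0 0 + a 0 1 * c 0 1 != 0 -> phi a b c != 0 ->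
  rank_le (T13 - (phi a b c)^-1 *: outer a b c) 3%N.
Proof.
set mu := a 0 0 * c 0 0 + a 0 1 * c 0 1 => bc_eq0 c01_neq0 mu_neq0 phi_neq0.
have [k [b1E b2E]] : exists k, b 0 1 = k * c 0 0 /\ b 0 2 = k * c 0 1.
  by apply: proportional2; rewrite // -bc_eq0; ring.
apply: (@rank_le3_outer _ (vec2 (a 0 0 / phi a b c) (a 0 1 / phi a b c))
  (vec2 (c 0 1 / mu) (- c 0 0 / mu)) (vec2 (c 0 1 / mu) (- c 0 0 / mu))
  (vec3 (- c 0 2) (c 0 0) (c 0 1)) (vec3 1 0 0) (vec3 0 (a 0 1) (- a 0 0))
  (vec3 (- b 0 1) (- b 0 2) (b 0 0)) (vec3 (a 0 1) (- a 0 0) 0) (vec3 0 0 1)).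
move: phi_neq0; rewrite /phi /x1 /x2 /y1 /y2 /y3 b1E b2E => phi_neq0.
apply/ffunP => -[[i j] k']; rewrite tensor_sub_scaleE T13E !ffunE !mxE.
by elim/ord2_ind: i; elim/ord3_ind: j; elim/ord3_ind: k'; rewrite /= ?b1E ?b2E /mu;
  field; apply/andP.
Qed.

Lemma rank_le3_T13_sub_b12 {a : 'rV[C]_2} {b c : 'rV[C]_3} :
  b 0 1 = 0 -> b 0 2 = 0 -> b 0 0 != 0 -> a 0 0 * c 0 0 + a 0 1 * c 0 1 != 0 ->
  rank_le (T13 - (b 0 0 * (a 0 0 * c 0 0 + a 0 1 * c 0 1))^-1 *: outer a b c) 3%N.
Proof.
set mu := a 0 0 * c 0 0 + a 0 1 * c 0 1 => b1_eq0 b2_eq0 b0_neq0 mu_neq0.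
apply: (@rank_le3_outer _ (vec2 (c 0 1 / mu) (- c 0 0 / mu)) (vec2 1 0) (vec2 0 1)
  (vec3 1 0 0) (vec3 (- a 0 0 * c 0 2 / mu) 1 0) (vec3 (- a 0 1 * c 0 2 / mu) 0 1)
  (vec3 (a 0 1) (- a 0 0) 0) (vec3 0 0 1) (vec3 0 0 1)).
apply/ffunP => -[[i j] k]; rewrite tensor_sub_scaleE T13E !ffunE !mxE.
by elim/ord2_ind: i; elim/ord3_ind: j; elim/ord3_ind: k; rewrite /= ?b1_eq0 ?b2_eq0 /mu;
  field; apply/andP.
Qed.

Lemma rank_le3_T13_sub_c01 {a : 'rV[C]_2} {b c : 'rV[C]_3} :
  c 0 0 = 0 -> c 0 1 = 0 -> c 0 2 != 0 -> a 0 0 * b 0 1 + a 0 1 * b 0 2 != 0 ->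
  rank_le (T13 - (c 0 2 * (a 0 0 * b 0 1 + a 0 1 * b 0 2))^-1 *: outer a b c) 3%N.
Proof.
set nu := a 0 0 * b 0 1 + a 0 1 * b 0 2 => c0_eq0 c1_eq0 c2_neq0 nu_neq0.
apply: (@rank_le3_outer _ (vec2 (b 0 2 / nu) (- b 0 1 / nu)) (vec2 1 0) (vec2 0 1)
  (vec3 0 (a 0 1) (- a 0 0)) (vec3 1 0 0) (vec3 1 0 0)
  (vec3 0 0 1) (vec3 1 0 (- a 0 0 * b 0 0 / nu)) (vec3 0 1 (- a 0 1 * b 0 0 / nu))).
apply/ffunP => -[[i j] k]; rewrite tensor_sub_scaleE T13E !ffunE !mxE.
by elim/ord2_ind: i; elim/ord3_ind: j; elim/ord3_ind: k; rewrite /= ?c0_eq0 ?c1_eq0 /nu;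
  field; apply/andP.
Qed.

Lemma rV3_neq0 (b : 'rV[C]_3) : b != 0 -> ~ [/\ b 0 0 = 0, b 0 1 = 0 & b 0 2 = 0].
Proof.
by move=> + [b0 b1 b2]; apply/negP; rewrite negbK; apply/eqP/rowP; elim/ord3_ind; rewrite mxE.
Qed.

Lemma phi_split (a : 'rV[C]_2) (b c : 'rV[C]_3) : phi a b c =
  b 0 0 * (a 0 0 * c 0 0 + a 0 1 * c 0 1) + c 0 2 * (a 0 0 * b 0 1 + a 0 1 * b 0 2).
Proof. by rewrite /phi /x1 /x2 /y1 /y2 /y3; ring. Qed.

Lemma forbidden_T13_b12 (a : 'rV[C]_2) (b c : 'rV[C]_3) :
  a != 0 -> b != 0 -> b 0 1 = 0 -> b 0 2 = 0 ->
  forbidden T13 (outer a b c) <-> phi a b c = 0.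
Proof.
move=> a_neq0 /rV3_neq0 b_neq0 b1_eq0 b2_eq0.
have b0_neq0 : b 0 0 != 0 by apply/eqP => b0_eq0; apply: b_neq0.
have phiE : phi a b c = b 0 0 * (a 0 0 * c 0 0 + a 0 1 * c 0 1).
  by rewrite phi_split b1_eq0 b2_eq0; ring.
split=> [/forbidden_T13E forb | phi_eq0].
  have [//|phi_neq0] := eqVneq (phi a b c) 0; exfalso.
  have ac_neq0 : a 0 0 * c 0 0 + a 0 1 * c 0 1 != 0.
    by apply: contra phi_neq0; rewrite phiE => /eqP ->; rewrite mulr0.
  apply: (forb _ _ (rank_le3_T13_sub_b12 b1_eq0 b2_eq0 b0_neq0 ac_neq0)).
  by rewrite invr_eq0 mulf_neq0.
apply/forbidden_T13E => l _; apply: rank_gt3_T13_sub_b12 => //.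
by apply/eqP; move: phi_eq0; rewrite phiE => /eqP; rewrite mulf_eq0 (negbTE b0_neq0).
Qed.

Lemma forbidden_T13_c01 (a : 'rV[C]_2) (b c : 'rV[C]_3) :
  a != 0 -> c != 0 -> c 0 0 = 0 -> c 0 1 = 0 ->
  forbidden T13 (outer a b c) <-> phi a b c = 0.
Proof.
move=> a_neq0 /rV3_neq0 c_neq0 c0_eq0 c1_eq0.
have c2_neq0 : c 0 2 != 0 by apply/eqP => c2_eq0; apply: c_neq0.
have phiE : phi a b c = c 0 2 * (a 0 0 * b 0 1 + a 0 1 * b 0 2).
  by rewrite phi_split c0_eq0 c1_eq0; ring.
split=> [/forbidden_T13E forb | phi_eq0].
  have [//|phi_neq0] := eqVneq (phi a b c) 0; exfalso.
  have ab_neq0 : a 0 0 * b 0 1 + a 0 1 * b 0 2 != 0.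
    by apply: contra phi_neq0; rewrite phiE => /eqP ->; rewrite mulr0.
  apply: (forb _ _ (rank_le3_T13_sub_c01 c0_eq0 c1_eq0 c2_neq0 ab_neq0)).
  by rewrite invr_eq0 mulf_neq0.
apply/forbidden_T13E => l _; apply: rank_gt3_T13_sub_c01 => //.
by apply/eqP; move: phi_eq0; rewrite phiE => /eqP; rewrite mulf_eq0 (negbTE c2_neq0).
Qed.

Lemma forbidden_T13_generic (a : 'rV[C]_2) (b c : 'rV[C]_3) :
  a != 0 -> ~ (b 0 1 = 0 /\ b 0 2 = 0) -> ~ (c 0 0 = 0 /\ c 0 1 = 0) ->
  forbidden T13 (outer a b c) <->
  a 0 0 * c 0 0 + a 0 1 * c 0 1 = 0 \/ a 0 0 * b 0 1 + a 0 1 * b 0 2 = 0 \/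
  (b 0 2 * c 0 0 - b 0 1 * c 0 1 = 0 /\ phi a b c = 0).
Proof.
move=> a_neq0 b12_neq0 c01_neq0; split=> [/forbidden_T13E forb | cond].
  have [ac_eq0|ac_neq0] := eqVneq (a 0 0 * c 0 0 + a 0 1 * c 0 1) 0; first by left.
  have [ab_eq0|ab_neq0] := eqVneq (a 0 0 * b 0 1 + a 0 1 * b 0 2) 0; first by right; left.
  have [bc_eq0|bc_neq0] := eqVneq (b 0 2 * c 0 0 - b 0 1 * c 0 1) 0; last first.
    by case: (forb _ (oner_neq0 C) (rank_le3_T13_sub_generic ac_neq0 ab_neq0 bc_neq0)).
  right; right; split=> //; have [//|phi_neq0] := eqVneq (phi a b c) 0; exfalso.
  apply: (forb _ _ (rank_le3_T13_sub_bc bc_eq0 c01_neq0 ac_neq0 phi_neq0)).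
  by rewrite invr_eq0.
apply/forbidden_T13E => l l_neq0.
have [ac_eq0|ac_neq0] := eqVneq (a 0 0 * c 0 0 + a 0 1 * c 0 1) 0.
  exact: rank_gt3_T13_sub_ac.
case: cond => [/eqP|[|[bc_eq0 phi_eq0]]]; first by rewrite (negbTE ac_neq0).
  exact: rank_gt3_T13_sub_ab.
exact: rank_gt3_T13_sub_bc.
Qed.

Theorem mainTheorem8 (a : 'rV[C]_2) (b c : 'rV[C]_3) :
  a != 0 -> b != 0 -> c != 0 ->
  (forbidden T13 (outer a b c) <->
   ( ((x1 a * y1 c + x2 a * y2 c = 0 \/ x1 a * y2 b + x2 a * y3 b = 0) /\
      ~ (y2 b = 0 /\ y3 b = 0) /\ ~ (y1 c = 0 /\ y2 c = 0))
   \/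
     ((y3 b * y1 c - y2 b * y2 c = 0 \/ x1 a * y1 c + x2 a * y2 c = 0 \/
       x1 a * y2 b + x2 a * y3 b = 0) /\ phi a b c = 0))).
Proof.
move=> a_neq0 b_neq0 c_neq0; rewrite /x1 /x2 /y1 /y2 /y3.
have [[b1_eq0 b2_eq0]|b12_neq0] := pselect (b 0 1 = 0 /\ b 0 2 = 0).
  have := forbidden_T13_b12 a b c a_neq0 b_neq0 b1_eq0 b2_eq0.
  have : a 0 0 * b 0 1 + a 0 1 * b 0 2 = 0 by rewrite b1_eq0 b2_eq0; ring.
  tauto.
have [[c0_eq0 c1_eq0]|c01_neq0] := pselect (c 0 0 = 0 /\ c 0 1 = 0).
  have := forbidden_T13_c01 a b c a_neq0 c_neq0 c0_eq0 c1_eq0.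
  have : b 0 2 * c 0 0 - b 0 1 * c 0 1 = 0 by rewrite c0_eq0 c1_eq0; ring.
  tauto.
have := forbidden_T13_generic a b c a_neq0 b12_neq0 c01_neq0.
tauto.
Qed.
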